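(* Let $n\ge2$, $m\ge1$, $q=2^m$, and let $\mathbf{H}_X^{(q)}$, $\mathbf{H}_Z^{(q)}$ be $q$-ary labelings of the toric Tanner graphs $\mathcal{G}_X$, $\mathcal{G}_Z$ (as in the context) with codes $\mathcal{C}_X^{(q)}$, $\mathcal{C}_Z^{(q)}$, such that every cycle of the labeled graph $\mathcal{G}_X$ has product $1$ and $(\mathcal{C}_Z^{(q)})^\perp\subset\mathcal{C}_X^{(q)}$. Then the minimum distance of the extended toric code $(\hat{\mathcal{C}}_X,\hat{\mathcal{C}}_Z)$, namely $\min\{\min\{|x|:x\in\hat{\mathcal{C}}_X\setminus\hat{\mathcal{C}}_Z^\perp\},\ \min\{|x|:x\in\hat{\mathcal{C}}_Z\setminus\hat{\mathcal{C}}_X^\perp\}\}$ (Hamming weights), is at least $n$.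
   Context: Indices are taken in $\mathbb{Z}_{2n}=\{0,\dots,2n-1\}$ with arithmetic mod $2n$. Variable nodes: $V=\{(i,j)\in\mathbb{Z}_{2n}^2: i+j\text{ even}\}$ ($2n^2$ nodes). $X$-checks: $C_X=\{(i,j): i\text{ odd}, j\text{ even}\}$; $Z$-checks: $C_Z=\{(i,j): i\text{ even}, j\text{ odd}\}$. Each check $(i,j)$ is adjacent to the variable nodes $(i\pm1,j)$, $(i,j\pm1)$; $\mathcal{G}_X$, $\mathcal{G}_Z$ are the bipartite graphs on $V\cup C_X$, $V\cup C_Z$. A $q$-ary labeling is $\mathbf{H}_X^{(q)}=(x_{c,v})\in\mathbb{F}_q^{C_X\times V}$ with $x_{c,v}\ne0$ iff $c,v$ adjacent, similarly $\mathbf{H}_Z^{(q)}\in\mathbb{F}_q^{C_Z\times V}$; $\mathcal{C}_X^{(q)}=\ker\mathbf{H}_X^{(q)}$, $\mathcal{C}_Z^{(q)}=\ker\mathbf{H}_Z^{(q)}$, $\perp$ w.r.t. the standard bilinear form. For a cycle $v_1,c_1,\dots,v_k,c_k,v_1$ of labeled $\mathcal{G}_X$ its product is $\prod_t x_{c_t v_{t+1}}x_{c_t v_t}^{-1}$. Extended toric code: fix an $\mathbb{F}_2$-basis of $\mathbb{F}_{2^m}$ and let $A:\mathbb{F}_{2^m}\to\mathbb{F}_2^{m\times m}$ send $a$ to the matrix of multiplication by $a$ in that basis. $\hat{\mathbf{H}}_X$ is obtained from $\mathbf{H}_X^{(q)}$ by replacing each entry $h$ by the block $A(h)$, and $\hat{\mathbf{H}}_Z$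 from $\mathbf{H}_Z^{(q)}$ by replacing each entry $h$ by $A(h)^T$ (zero entries become zero blocks); then $\hat{\mathbf{H}}_X\hat{\mathbf{H}}_Z^T=0$. $\hat{\mathcal{C}}_X=\ker\hat{\mathbf{H}}_X$, $\hat{\mathcal{C}}_Z=\ker\hat{\mathbf{H}}_Z\subset\mathbb{F}_2^{2mn^2}$, with $\perp$ the standard binary dual. *)

From HB Require Import structures.
From mathcomp Require Import all_boot all_order all_algebra all_field.
Set Implicit Arguments. Unset Strict Implicit. Unset Printing Implicit Defensive.
Import GRing.Theory.
Local Open Scope ring_scope.

(* Positions of the 2n x 2n torus Z_{2n}^2; 'I_(2n) with arithmetic mod 2n. *)
Definition pos (n : nat) := ('I_(2 * n) * 'I_(2 * n))%type.

Definition isVar n (p : pos n) : bool := ~~ odd (p.1 + p.2)%N.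
Definition isCX n (p : pos n) : bool := odd p.1 && ~~ odd p.2.
Definition isCZ n (p : pos n) : bool := ~~ odd p.1 && odd p.2.

Definition VN n := {p : pos n | isVar p}.
Definition CX n := {p : pos n | isCX p}.
Definition CZ n := {p : pos n | isCZ p}.

Definition adj n (c v : pos n) : bool :=
  let N := (2 * n)%N in
  [|| ((v.1 : nat) == (c.1 + 1) %% N)%N && ((v.2 : nat) == c.2),
      ((v.1 : nat) == (c.1 + N - 1) %% N)%N && ((v.2 : nat) == c.2),
      ((v.1 : nat) == c.1) && ((v.2 : nat) == (c.2 + 1) %% N)%N |
      ((v.1 : nat) == c.1) && ((v.2 : nat) == (c.2 + N - 1) %% N)%N].

Definition labeling n (F : fieldType) (P : pos n -> bool)
    (H : {p : pos n | P p} -> VN n -> F) : Prop :=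
  forall c v, (H c v != 0) = adj (val c) (val v).

Definition cycles_product_one n (F : fieldType) (H : CX n -> VN n -> F) : Prop :=
  forall (k : nat) (vs : 'I_k -> VN n) (cs : 'I_k -> CX n),
    (2 <= k)%N -> injective vs -> injective cs ->
    (forall t, adj (val (cs t)) (val (vs t)) && adj (val (cs t)) (val (vs (ordS t)))) ->
    \prod_(t < k) (H (cs t) (vs (ordS t)) / H (cs t) (vs t)) = 1.

Definition in_code (R : comRingType) (C V : finType) (H : C -> V -> R) (x : V -> R) : Prop :=
  forall c, \sum_v H c v * x v = 0.

Definition dual (R : comRingType) (V : finType) (P : (V -> R) -> Prop) (y : V -> R) : Prop :=
  forall x, P x -> \sum_v x v * y v = 0.

Definition wt (R : ringType) (V : finType) (x : V -> R) : nat := #|[pred v | x v != 0]|.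

Definition f2 (F : fieldType) (a : 'F_2) : F := (nat_of_ord a)%:R.

Definition is_F2_basis (F : fieldType) m (b : 'I_m -> F) : Prop :=
  bijective (fun l : {ffun 'I_m -> 'F_2} => \sum_(i < m) f2 F (l i) * b i).

Definition mult_matrix (F : fieldType) m (b : 'I_m -> F) (A : F -> 'M['F_2]_m) : Prop :=
  forall a j, a * b j = \sum_(i < m) f2 F (A a i j) * b i.

(* binary parity-check matrices of the extended code: block (c,v) = A(x_{c,v}),
   resp. A(x_{c,v})^T *)
Definition extX n (F : fieldType) m (A : F -> 'M['F_2]_m) (H : CX n -> VN n -> F)
  : (CX n * 'I_m) -> (VN n * 'I_m) -> 'F_2 :=
  fun cr vs => A (H cr.1 vs.1) cr.2 vs.2.
Definition extZ n (F : fieldType) m (A : F -> 'M['F_2]_m) (H : CZ n -> VN n -> F)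
  : (CZ n * 'I_m) -> (VN n * 'I_m) -> 'F_2 :=
  fun cr vs => A (H cr.1 vs.1) vs.2 cr.2.

From HB Require Import structures.
From mathcomp Require Import all_boot all_order all_algebra all_field zify.
Import GRing.Theory.

Set Implicit Arguments. Unset Strict Implicit.

(* Let y be a q-ary codeword of C_X of weight < n. There are n odd rows and n
   even columns, so some odd row j0 meets the support of y in no odd-odd
   variable and some even column i0 meets it in no even-even variable.
   Walking up each even column from row j0, choose the coefficients of the
   Z-checks of that column one at a time so that the residual
   r = lam H_Z - y vanishes on the even-even variables of the column, except
   possibly on row j0 - 1. Since H_X H_Z^T = 0, r is again in C_X, and an
   X-check has exactly four neighbours, all with nonzero labels: if r vanishes
   on three of them it vanishes on the fourth. Sweeping up from row j0 kills r
   on the odd-odd variables, then sweeping along row j0 - 1 from column i0,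
   where all coefficients are zero, kills the rest. So light codewords of C_X
   lie in the row space of H_Z, i.e. in C_Z^perp, and transposing the torus
   gives the same for C_Z. Binary codewords of the extended code reduce to
   q-ary ones through the F_q-linear bijection a |-> A(a) e_0 between F_q and
   F_2^m, which does not increase weights. *)

(** * Arithmetic on the torus *)

Section ModTwoN.
Variable n : nat.
Local Notation N := (2 * n)%N.

Lemma modN_double y : (y < 2 * N)%N -> y %% N = if (y < N)%N then y else (y - N)%N.
Proof.
move=> y_lt; case: ifP => y_small; first by rewrite modn_small.
by rewrite -(subnK (_ : N <= y)%N) ?modnDr ?modn_small //; lia.
Qed.

Lemma odd_modN i : odd (i %% N) = odd i.
Proof. by rewrite odd_mod // oddM. Qed.

Lemma succ_modN_eq a c : (a < N)%N -> (c < N)%N ->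
  (a == (c + 1) %% N) = (c == (a + N - 1) %% N).
Proof.
move=> a_lt c_lt; rewrite !modN_double; try lia.
by case: ifP => ?; case: ifP => ?; apply/eqP/eqP; lia.
Qed.

Lemma parity_repr_modN a j : (a < N)%N -> (j < N)%N -> odd a = odd j ->
  exists2 k, (k < n)%N & j = (a + k.*2) %% N.
Proof.
move=> a_lt j_lt odd_aj; case: (leqP a j) => a_j.
  exists ((j - a)./2); first lia.
  by rewrite (_ : a + _ = j) ?modn_small; lia.
exists ((j + N - a)./2); first lia.
by rewrite (_ : a + _ = j + N) ?modnDr ?modn_small; lia.
Qed.

End ModTwoN.

Section Torus.
Variable n : nat.
Hypothesis n_gt0 : (0 < n)%N.
Local Notation N := (2 * n)%N.

Definition ord_mod (i : nat) : 'I_N := Ordinal (@ltn_pmod i N ltac:(lia)).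
Definition node (i j : nat) : pos n := (ord_mod i, ord_mod j).

Lemma node_eqE (v : pos n) i j :
  (v == node i j) = ((v.1 : nat) == i %% N) && ((v.2 : nat) == j %% N).
Proof. by case: v. Qed.

Lemma node_pos (v : pos n) : node v.1 v.2 = v.
Proof. by case: v => a b; congr pair; apply: val_inj; rewrite /= modn_small. Qed.

Lemma ord_mod_mod i : ord_mod (i %% N) = ord_mod i.
Proof. by apply: val_inj; rewrite /= modn_mod. Qed.

Lemma ord_modDml i j : ord_mod (i %% N + j) = ord_mod (i + j).
Proof. by apply: val_inj; rewrite /= modnDml. Qed.

Lemma ord_mod_pred i : (0 < i)%N -> ord_mod (i %% N + N - 1) = ord_mod (i - 1).
Proof.
move=> i_gt0; apply: val_inj => /=.
rewrite -addnBA ?modnDml; last lia.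
by rewrite (_ : i + (N - 1) = i - 1 + N) ?modnDr; lia.
Qed.

Lemma node_modl i j : node (i %% N) j = node i j.
Proof. by rewrite /node ord_mod_mod. Qed.
Lemma node_modr i j : node i (j %% N) = node i j.
Proof. by rewrite /node ord_mod_mod. Qed.
Lemma node_modDl i j a : node (i %% N + a) j = node (i + a) j.
Proof. by rewrite /node ord_modDml. Qed.
Lemma node_modDr i j a : node i (j %% N + a) = node i (j + a).
Proof. by rewrite /node ord_modDml. Qed.
Lemma node_predl i j : (0 < i)%N -> node (i %% N + N - 1) j = node (i - 1) j.
Proof. by move=> i_gt0; rewrite /node ord_mod_pred. Qed.
Lemma node_predr i j : (0 < j)%N -> node i (j %% N + N - 1) = node i (j - 1).
Proof. by move=> j_gt0; rewrite /node ord_mod_pred. Qed.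

Lemma isVar_node i j : isVar (node i j) = ~~ odd (i + j).
Proof. by rewrite /isVar /= oddD !odd_modN oddD. Qed.
Lemma isCX_node i j : isCX (node i j) = odd i && ~~ odd j.
Proof. by rewrite /isCX /= !odd_modN. Qed.
Lemma isCZ_node i j : isCZ (node i j) = ~~ odd i && odd j.
Proof. by rewrite /isCZ /= !odd_modN. Qed.

Lemma adjE (c v : pos n) : adj c v =
  [|| v == node (c.1 + 1) c.2, v == node (c.1 + N - 1) c.2,
      v == node c.1 (c.2 + 1) | v == node c.1 (c.2 + N - 1)].
Proof. by rewrite /adj !node_eqE !(modn_small (ltn_ord c.1)) !(modn_small (ltn_ord c.2)). Qed.

Lemma adj_nodeE i j v : (0 < i)%N -> (0 < j)%N -> adj (node i j) v =
  [|| v == node (i + 1) j, v == node (i - 1) j,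
      v == node i (j + 1) | v == node i (j - 1)].
Proof.
move=> i_gt0 j_gt0; rewrite adjE /= !node_modr !node_modl.
by rewrite node_modDl node_modDr node_predl ?node_predr.
Qed.

Lemma adjC (c v : pos n) : adj c v = adj v c.
Proof.
case: c => [[a a_lt] [b b_lt]]; case: v => [[c c_lt] [d d_lt]].
rewrite /adj /= !succ_modN_eq // [b == d]eq_sym [a == c]eq_sym.
by case: (c == a); case: (d == b); case: (a == _ %% _); case: (c == _ %% _);
  case: (b == _ %% _); case: (d == _ %% _).
Qed.

Lemma adj_node_up i j : adj (node i j) (node i (j + 1)).
Proof. by rewrite adjE; apply/or4P; apply: Or43; rewrite node_eqE /= !modn_mod modnDml !eqxx. Qed.

Lemma adj_node_right i j : adj (node i j) (node (i + 1) j).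
Proof. by rewrite adjE; apply/or4P; apply: Or41; rewrite node_eqE /= !modn_mod modnDml !eqxx. Qed.

End Torus.

Local Open Scope ring_scope.

(** * Row spaces and binary expansion *)

Definition in_rowspan (R : nzRingType) (C V : finType) (H : C -> V -> R) (x : V -> R) :=
  exists w : C -> R, forall v, x v = \sum_c w c * H c v.

Lemma eq_in_code (R : comNzRingType) (C V : finType) (H H' : C -> V -> R) x :
  H =2 H' -> in_code H x <-> in_code H' x.
Proof.
by move=> eH; split=> x_code c; rewrite -[RHS](x_code c); apply: eq_bigr => v _; rewrite eH.
Qed.

Lemma rowspan_dual_code (R : comNzRingType) (C V : finType) (H : C -> V -> R) x :
  in_rowspan H x -> dual (in_code H) x.
Proof.
case=> w xE z z_code.
under eq_bigr => v _ do rewrite xE mulr_sumr.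
rewrite exchange_big big1 // => c _.
under eq_bigr => v _ do rewrite mulrCA [z v * _]mulrC.
by rewrite -mulr_sumr z_code mulr0.
Qed.

Lemma orthogonal_checks (R : comNzRingType) (CX CZ V : finType)
    (HX : CX -> V -> R) (HZ : CZ -> V -> R) :
  (forall y, dual (in_code HZ) y -> in_code HX y) ->
  forall c p, \sum_v HX c v * HZ p v = 0.
Proof.
move=> dualZ_sub_codeX c p; apply: dualZ_sub_codeX; apply: rowspan_dual_code.
exists (fun p' => (p' == p)%:R) => v.
by rewrite (bigD1 p) //= eqxx mul1r big1 ?addr0 // => p' /negPf->; rewrite mul0r.
Qed.

Lemma missing_value (T : finType) k (S : {pred T}) (g : T -> 'I_k) :
  (#|S| < k)%N -> exists i : 'I_k, forall v, v \in S -> g v != i.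
Proof.
move=> S_small; have /set0Pn[i] : [set: 'I_k] :\: g @: S != set0.
  rewrite -card_gt0 cardsDS ?subsetT // cardsT card_ord subn_gt0.
  exact: leq_ltn_trans (leq_imset_card g S) S_small.
rewrite !inE andbT => i_miss; exists i => v vS.
by apply: contraNneq i_miss => <-; apply: imset_f.
Qed.

Definition blowup (F K : Type) m (M : F -> 'M[K]_m) (C V : Type) (H : C -> V -> F) :
  C * 'I_m -> V * 'I_m -> K := fun cr vs => M (H cr.1 vs.1) cr.2 vs.2.
Definition blowupT (F K : Type) m (M : F -> 'M[K]_m) (C V : Type) (H : C -> V -> F) :
  C * 'I_m -> V * 'I_m -> K := fun cr vs => M (H cr.1 vs.1) vs.2 cr.2.

Section Expansion.
Variables (F K : finFieldType) (m : nat) (M : F -> 'M[K]_m).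
Hypothesis m_gt0 : (0 < m)%N.
Hypothesis cardF : #|F| = (#|K| ^ m)%N.
Hypothesis MD : {morph M : a b / a + b}.
Hypothesis MM : {morph M : a b / a * b >-> a *m b}.
Hypothesis M1 : M 1 = 1%:M.

(* [a |-> M a e_0] is an [F]-linear bijection from [F] to column vectors, [a]
   acting by [M a]; bijectivity comes from injectivity and counting. *)
Definition vec_of (a : F) : 'cV[K]_m := M a *m delta_mx (Ordinal m_gt0) ord0.

Lemma vec_ofD : {morph vec_of : a b / a + b}.
Proof. by move=> a b; rewrite /vec_of MD mulmxDl. Qed.

Lemma vec_of0 : vec_of 0 = 0.
Proof. by apply: (addrI (vec_of 0)); rewrite -vec_ofD !addr0. Qed.

Lemma vec_ofM a b : vec_of (a * b) = M a *m vec_of b.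
Proof. by rewrite /vec_of MM mulmxA. Qed.

Lemma vec_of_inj : injective vec_of.
Proof.
have vec_ofN a : vec_of (- a) = - vec_of a.
  by apply/eqP; rewrite -subr_eq0 opprK -vec_ofD addNr vec_of0.
move=> a b eab; apply/eqP; rewrite -subr_eq0; apply/negP => /negP nz.
have : M (a - b)^-1 *m vec_of (a - b) = 0.
  by rewrite vec_ofD vec_ofN eab subrr mulmx0.
rewrite -vec_ofM mulVf // /vec_of M1 mul1mx => /matrixP/(_ (Ordinal m_gt0) ord0).
by rewrite !mxE !eqxx => /eqP; rewrite oner_eq0.
Qed.

Lemma vec_of_bij : bijective vec_of.
Proof. by apply: (inj_card_bij vec_of_inj); rewrite card_mx cardF muln1. Qed.

Definition elt_of (u : 'cV[K]_m) : F := odflt 0 [pick a | vec_of a == u].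

Lemma elt_ofK : cancel elt_of vec_of.
Proof.
move=> u; rewrite /elt_of; case: pickP => [a /eqP //|/= no_preim].
have [g _ gK] := vec_of_bij.
by have := no_preim (g u); rewrite gK eqxx.
Qed.

Lemma elt_ofD : {morph elt_of : u v / u + v}.
Proof. by move=> u v; apply: vec_of_inj; rewrite vec_ofD !elt_ofK. Qed.

Lemma elt_of0 : elt_of 0 = 0.
Proof. by apply: vec_of_inj; rewrite vec_of0 elt_ofK. Qed.

Lemma elt_ofM a u : elt_of (M a *m u) = a * elt_of u.
Proof. by apply: vec_of_inj; rewrite vec_ofM !elt_ofK. Qed.

Variables (C1 C2 V : finType) (P : C1 -> V -> F) (Q : C2 -> V -> F).

Definition collapse (x : V * 'I_m -> K) (v : V) : F := elt_of (\col_s x (v, s)).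

Lemma collapse_code x : in_code (blowup M P) x -> in_code P (collapse x).
Proof.
move=> x_code c; under eq_bigr => v _ do rewrite -elt_ofM.
rewrite -(big_morph elt_of elt_ofD elt_of0).
suff -> : \sum_v M (P c v) *m \col_s x (v, s) = 0 by rewrite elt_of0.
apply/matrixP => r j; rewrite summxE mxE -[RHS](x_code (c, r)).
under eq_bigr => v _ do rewrite mxE; under eq_bigr => v _ do under eq_bigr => s _ do rewrite mxE.
by rewrite pair_bigA; apply: eq_bigr => -[v s].
Qed.

Lemma wt_collapse x : (wt (collapse x) <= wt x)%N.
Proof.
rewrite /wt; apply: leq_trans (leq_imset_card fst _).
apply: subset_leq_card; apply/subsetP => v; rewrite inE /= => nz.
have [s xs_nz|] := pickP (fun s => x (v, s) != 0); first by apply/imsetP; exists (v, s).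
move=> x_v0; move: nz; rewrite /collapse; suff -> : \col_s x (v, s) = 0 by rewrite elt_of0 eqxx.
by apply/matrixP => s j; rewrite !mxE; apply/eqP; rewrite -[_ == 0]negbK x_v0.
Qed.

Lemma collapse_rowspan x : in_rowspan Q (collapse x) -> in_rowspan (blowupT M Q) x.
Proof.
case=> lam xE; exists (fun zr => vec_of (lam zr.1) zr.2 ord0) => -[v s].
have := congr1 (fun u : 'cV_m => u s ord0) (elt_ofK (\col_s x (v, s))).
rewrite /= mxE => <-; rewrite -/(collapse x v) xE (big_morph vec_of vec_ofD vec_of0) summxE.
rewrite (eq_bigr (fun z => \sum_r M (Q z v) s r * vec_of (lam z) r ord0)); last first.
  by move=> z _; rewrite mulrC vec_ofM mxE.
by rewrite pair_bigA; apply: eq_bigr => -[z r] _; rewrite mulrC.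
Qed.

Lemma expanded_light_codeword_in_rowspan w :
  (forall y, in_code P y -> (wt y < w)%N -> in_rowspan Q y) ->
  forall x, in_code (blowup M P) x -> (wt x < w)%N -> in_rowspan (blowupT M Q) x.
Proof.
move=> qary_light x x_code x_light; apply: collapse_rowspan; apply: qary_light.
- exact: collapse_code.
- exact: leq_ltn_trans (wt_collapse x) x_light.
Qed.

End Expansion.

Section MultMatrix.
Variables (F : finFieldType) (m : nat) (b : 'I_m -> F) (A : F -> 'M['F_2]_m).
Hypothesis cardF : #|F| = (2 ^ m)%N.
Hypothesis b_basis : is_F2_basis b.
Hypothesis A_mult : mult_matrix b A.

Lemma f2D : {morph f2 F : a c / a + c}.
Proof.
have two0 : 2%:R = 0 :> F by exact: pcharf0 (card_finPcharP cardF isT).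
by move=> [[|[|a]] ?] [[|[|c]] ?] //; rewrite /f2 /= ?add0r ?addr0 // -natrD two0.
Qed.

Lemma f2M : {morph f2 F : a c / a * c}.
Proof. by move=> [[|[|a]] ?] [[|[|c]] ?] //; rewrite /f2 /= ?mul0r ?mulr0 ?mulr1. Qed.

Lemma f2_sum (I : finType) (g : I -> 'F_2) : f2 F (\sum_i g i) = \sum_i f2 F (g i).
Proof. exact: (big_morph _ f2D). Qed.

Lemma basis_coord_inj (l1 l2 : 'I_m -> 'F_2) :
  \sum_i f2 F (l1 i) * b i = \sum_i f2 F (l2 i) * b i -> l1 =1 l2.
Proof.
move=> e i; suff /ffunP/(_ i) : [ffun i => l1 i] = [ffun i => l2 i] by rewrite !ffunE.
by apply: (bij_inj b_basis); under eq_bigr do rewrite ffunE; under [RHS]eq_bigr do rewrite ffunE.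
Qed.

Lemma mult_matrixD : {morph A : a c / a + c}.
Proof.
move=> a c; apply/matrixP => i j; move: i; apply: basis_coord_inj.
rewrite -A_mult mulrDl !A_mult -big_split; apply: eq_bigr => k _.
by rewrite mxE f2D mulrDl.
Qed.

Lemma mult_matrixM : {morph A : a c / a * c >-> a *m c}.
Proof.
move=> a c; apply/matrixP => i j; move: i; apply: basis_coord_inj.
rewrite -A_mult -mulrA A_mult mulr_sumr.
under eq_bigr => k _ do rewrite mulrCA A_mult mulr_sumr.
rewrite exchange_big; apply: eq_bigr => k _.
rewrite mxE f2_sum mulr_suml; apply: eq_bigr => l _.
by rewrite f2M mulrA [f2 F (A c _ _) * _]mulrC.
Qed.

Lemma mult_matrix1 : A 1 = 1%:M.
Proof.
apply/matrixP => i j; move: i; apply: basis_coord_inj.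
rewrite -A_mult mul1r (bigD1 j) //= mxE eqxx mul1r big1 ?addr0 // => k /negPf k_j.
by rewrite mxE k_j mul0r.
Qed.

End MultMatrix.

(** * Peeling a light codeword *)

Section Peeling.
Variable n : nat.
Hypothesis n_gt1 : (1 < n)%N.
Local Notation N := (2 * n)%N.
Let n_gt0 : (0 < n)%N := ltnW n_gt1.
Local Notation node := (node n_gt0).

Variable F : fieldType.
Variables X Z : pos n -> pos n -> F.
Variable y : pos n -> F.
Hypothesis labX : forall c v, isCX c -> isVar v -> (X c v != 0) = adj c v.
Hypothesis labZ : forall p v, isCZ p -> isVar v -> (Z p v != 0) = adj p v.
Hypothesis XZ_orth : forall c p, isCX c -> isCZ p -> \sum_(v | isVar v) X c v * Z p v = 0.
Hypothesis y_code : forall c, isCX c -> \sum_(v | isVar v) X c v * y v = 0.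

Definition residual (lam : pos n -> F) v := \sum_(p | isCZ p) lam p * Z p v - y v.

Lemma residual_code lam c : isCX c -> \sum_(v | isVar v) X c v * residual lam v = 0.
Proof.
move=> cX; under eq_bigr => v _ do rewrite mulrBr mulr_sumr.
rewrite sumrB y_code // subr0 exchange_big /= big1 // => p pZ.
by under eq_bigr => v _ do rewrite mulrCA; rewrite -mulr_sumr XZ_orth ?mulr0.
Qed.

Lemma code_forced_zero (w : pos n -> F) c t :
  (forall c, isCX c -> \sum_(v | isVar v) X c v * w v = 0) ->
  isCX c -> isVar t -> adj c t ->
  (forall v, isVar v -> adj c v -> v != t -> w v = 0) -> w t = 0.
Proof.
move=> w_code cX tV ct w_nbr; move: (w_code c cX).
rewrite (bigD1 t) //= big1 ?addr0 => [/eqP|v /andP[vV vt]].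
  by rewrite mulf_eq0 -[X c t == 0]negbK labX // ct => /eqP.
have [cv|ncv] := boolP (adj c v); first by rewrite w_nbr ?mulr0.
by move: ncv; rewrite -labX // negbK => /eqP->; rewrite mul0r.
Qed.

Lemma Z_nonadj p v : isCZ p -> isVar v -> ~~ adj p v -> Z p v = 0.
Proof. by move=> pZ vV; rewrite -labZ // negbK => /eqP. Qed.

Lemma Z_adj_odd_var (p v : pos n) :
  isVar v -> odd v.1 -> isCZ p -> adj p v -> (p.2 : nat) = v.2.
Proof.
move=> vV v1 pZ; rewrite adjC (adjE n_gt0); case/or4P => /eqP vE; move: pZ;
  by rewrite vE ?isCZ_node ?v1 //= modn_small.
Qed.

Lemma Z_adj_even_var (p v : pos n) :
  isVar v -> ~~ odd v.1 -> isCZ p -> adj p v -> (p.1 : nat) = v.1.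
Proof.
move=> vV v1 pZ; rewrite adjC (adjE n_gt0).
case/or4P => /eqP vE; move: pZ; rewrite vE isCZ_node; last 2 first.
- by rewrite /= modn_small.
- by rewrite /= modn_small.
- by rewrite oddD (negPf v1).
- by rewrite (_ : odd (v.1 + N - 1) = ~~ odd v.1) ?v1 //; lia.
Qed.

Lemma sum_Z_even_var (f : pos n -> F) v : isVar v -> ~~ odd v.1 ->
  \sum_(p | isCZ p) f p * Z p v =
  f (node v.1 (v.2 + 1)) * Z (node v.1 (v.2 + 1)) v +
  f (node v.1 (v.2 + N - 1)) * Z (node v.1 (v.2 + N - 1)) v.
Proof.
move=> vV v1.
have v2 : ~~ odd v.2 by move: vV v1; rewrite /isVar oddD; case: odd; case: odd.
have v2_lt := ltn_ord v.2.
have upZ : isCZ (node v.1 (v.2 + 1)) by rewrite isCZ_node oddD (negPf v1) (negPf v2).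
have downZ : isCZ (node v.1 (v.2 + N - 1)).
  by rewrite isCZ_node (negPf v1) (_ : odd (v.2 + N - 1) = ~~ odd v.2) ?v2 //; lia.
have up_down : node v.1 (v.2 + N - 1) != node v.1 (v.2 + 1).
  apply/negP => /eqP/(congr1 (fun p => nat_of_ord p.2)) /=.
  by rewrite !modN_double; try lia; case: ifP; case: ifP; lia.
rewrite (bigD1 (node v.1 (v.2 + 1))) // (bigD1 (node v.1 (v.2 + N - 1))) /=; last first.
  by rewrite downZ up_down.
rewrite big1 ?addr0 // => p /andP[/andP[pZ p_up] p_down].
rewrite Z_nonadj ?mulr0 // adjC (adjE n_gt0); apply/negP; case/or4P => /eqP pE.
- by move: pZ; rewrite pE isCZ_node oddD (negPf v1).
- by move: pZ; rewrite pE isCZ_node (_ : odd (v.1 + N - 1) = ~~ odd v.1) ?v1 //; lia.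
- by rewrite pE eqxx in p_up.
- by rewrite pE eqxx in p_down.
Qed.

Section Gap.
Variables j0 i0 : nat.
Hypotheses (j0_odd : odd j0) (j0_lt : (j0 < N)%N).
Hypotheses (i0_even : ~~ odd i0) (i0_lt : (i0 < N)%N).
Hypothesis y_row0 : forall v, isVar v -> odd v.1 -> (v.2 : nat) = j0 -> y v = 0.
Hypothesis y_col0 : forall v, isVar v -> ~~ odd v.1 -> (v.1 : nat) = i0 -> y v = 0.

(* The coefficient of the Z-check (i, j0 + 2k); the (k+1)-th is chosen so that
   the residual vanishes at the variable (i, j0 + 2k + 1) between them. *)
Fixpoint col_coef (i k : nat) : F :=
  if k is k'.+1 then
    (y (node i (j0 + k'.*2 + 1))
       - col_coef i k' * Z (node i (j0 + k'.*2)) (node i (j0 + k'.*2 + 1)))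
    / Z (node i (j0 + k'.*2 + 2)) (node i (j0 + k'.*2 + 1))
  else 0.

Definition coef (p : pos n) : F := col_coef p.1 (((p.2 + N - j0) %% N)./2).

Lemma coef_node i k : (k < n)%N -> coef (node i (j0 + k.*2)) = col_coef (i %% N) k.
Proof.
move=> k_lt; rewrite /coef /=; congr col_coef.
rewrite [((j0 + k.*2) %% N)%N]modN_double; last by lia.
case: ifP => j_small.
  by rewrite (_ : (j0 + k.*2 + N - j0 = k.*2 + N)%N) ?modnDr ?modn_small ?doubleK //; lia.
by rewrite (_ : (j0 + k.*2 - N + N - j0 = k.*2)%N) ?modn_small ?doubleK //; lia.
Qed.

Lemma coef_row0 (p : pos n) : (p.2 : nat) = j0 -> coef p = 0.
Proof. by move=> p2; rewrite /coef p2 addKn modnn. Qed.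

Lemma col_coef0 k : col_coef i0 k = 0.
Proof.
elim: k => [//|k IHk] /=; rewrite IHk mul0r subr0 y_col0 ?mul0r //.
- by rewrite isVar_node; lia.
- by rewrite /= odd_modN.
- by rewrite /= modn_small.
Qed.

Lemma residual_even_node i k : ~~ odd i -> (k.+1 < n)%N ->
  residual coef (node i (j0 + k.*2 + 1)) = 0.
Proof.
move=> i_even k_lt.
have vV : isVar (node i (j0 + k.*2 + 1)) by rewrite isVar_node; lia.
have v1 : ~~ odd (node i (j0 + k.*2 + 1)).1 by rewrite /= odd_modN.
rewrite /residual (sum_Z_even_var _ vV v1) /= node_modl node_modDr node_predr ?addnK; last lia.
rewrite (_ : (j0 + k.*2 + 1 + 1 = j0 + k.+1.*2)%N); last lia.
rewrite !coef_node; try lia.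
have Z_up : Z (node i (j0 + k.+1.*2)) (node i (j0 + k.*2 + 1)) != 0.
  rewrite labZ //; last by rewrite isCZ_node; lia.
  by rewrite adjC (_ : (j0 + k.+1.*2 = j0 + k.*2 + 1 + 1)%N) ?adj_node_up //; lia.
rewrite [col_coef _ k.+1]/= !node_modl (_ : (j0 + k.*2 + 2 = j0 + k.+1.*2)%N); last lia.
by rewrite divfK // modn_mod subrK subrr.
Qed.

Lemma residual_odd_row0 (v : pos n) :
  isVar v -> odd v.1 -> (v.2 : nat) = j0 -> residual coef v = 0.
Proof.
move=> vV v1 v2; rewrite /residual y_row0 // subr0; apply: big1 => p pZ.
have [pv|npv] := boolP (adj p v); last by rewrite Z_nonadj ?mulr0.
by rewrite coef_row0 ?mul0r // (Z_adj_odd_var vV v1 pZ pv).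
Qed.

Lemma residual_odd_node k : (k < n)%N ->
  forall i, odd i -> residual coef (node i (j0 + k.*2)) = 0.
Proof.
elim: k => [|k IHk] k_lt i i_odd.
  apply: residual_odd_row0; rewrite ?isVar_node /= ?odd_modN ?addn0 ?modn_small //; lia.
apply: (@code_forced_zero _ (node i (j0 + k.*2 + 1)) _ (@residual_code coef)).
- by rewrite isCX_node; lia.
- by rewrite isVar_node; lia.
- by rewrite (_ : (j0 + k.+1.*2 = j0 + k.*2 + 1 + 1)%N) ?adj_node_up //; lia.
move=> v vV; rewrite adj_nodeE; try lia.
case/or4P => /eqP -> v_ne.
- by apply: residual_even_node; lia.
- by apply: residual_even_node; lia.
- by move: v_ne; rewrite (_ : (j0 + k.*2 + 1 + 1 = j0 + k.+1.*2)%N) ?eqxx //; lia.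
- by rewrite addnK IHk //; lia.
Qed.

Lemma residual_odd (v : pos n) : isVar v -> odd v.1 -> residual coef v = 0.
Proof.
move=> vV v1; have v2 : odd v.2 by move: vV v1; rewrite /isVar; lia.
have [k k_lt v2E] := parity_repr_modN j0_lt (ltn_ord v.2) (etrans j0_odd (esym v2)).
by rewrite -(node_pos n_gt0 v) v2E node_modr residual_odd_node.
Qed.

Lemma residual_last_row_node k : (k < n)%N ->
  residual coef (node (i0 + k.*2) (j0 + N - 1)) = 0.
Proof.
elim: k => [|k IHk] k_lt.
  have vV : isVar (node i0 (j0 + N - 1)) by rewrite isVar_node; lia.
  have v1 : ~~ odd (node i0 (j0 + N - 1)).1 by rewrite /= odd_modN.
  rewrite double0 addn0 /residual y_col0 // ?subr0; last by rewrite /= modn_small.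
  apply: big1 => p pZ.
  have [pv|npv] := boolP (adj p (node i0 (j0 + N - 1))); last by rewrite Z_nonadj ?mulr0.
  by rewrite /coef (Z_adj_even_var vV v1 pZ pv) /= modn_small // col_coef0 mul0r.
apply: (@code_forced_zero _ (node (i0 + k.*2 + 1) (j0 + N - 1)) _ (@residual_code coef)).
- by rewrite isCX_node; lia.
- by rewrite isVar_node; lia.
- by rewrite (_ : (i0 + k.+1.*2 = i0 + k.*2 + 1 + 1)%N) ?adj_node_right //; lia.
move=> v vV; rewrite adj_nodeE; try lia.
case/or4P => /eqP -> v_ne.
- by move: v_ne; rewrite (_ : (i0 + k.*2 + 1 + 1 = i0 + k.+1.*2)%N) ?eqxx //; lia.
- by rewrite addnK IHk //; lia.
- by apply: residual_odd; rewrite ?isVar_node /= ?odd_modN; lia.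
- by apply: residual_odd; rewrite ?isVar_node /= ?odd_modN; lia.
Qed.

Lemma residual_last_row (v : pos n) :
  isVar v -> ~~ odd v.1 -> (v.2 : nat) = ((j0 + N - 1) %% N)%N -> residual coef v = 0.
Proof.
move=> vV v1 v2.
have [k k_lt v1E] := parity_repr_modN i0_lt (ltn_ord v.1) (etrans (negbTE i0_even) (esym (negbTE v1))).
by rewrite -(node_pos n_gt0 v) v1E v2 node_modl node_modr residual_last_row_node.
Qed.

Lemma residual_even (v : pos n) :
  isVar v -> ~~ odd v.1 -> (v.2 : nat) != ((j0 + N - 1) %% N)%N -> residual coef v = 0.
Proof.
move=> vV v1 v2; have v2_even : ~~ odd v.2 by move: vV v1; rewrite /isVar; lia.
have [[|k] k_lt v2E] := @parity_repr_modN n (j0 - 1) v.2 ltac:(lia) (ltn_ord v.2) ltac:(lia).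
  by move: v2; rewrite v2E (_ : (j0 + N - 1 = j0 - 1 + 0.*2 + N)%N) ?modnDr ?eqxx //; lia.
rewrite -(node_pos n_gt0 v) v2E node_modr.
by rewrite (_ : (j0 - 1 + k.+1.*2 = j0 + k.*2 + 1)%N) ?residual_even_node //; lia.
Qed.

Lemma residual_eq0 v : isVar v -> residual coef v = 0.
Proof.
move=> vV; have [v1|v1] := boolP (odd v.1); first exact: residual_odd.
have [v2|v2] := eqVneq (v.2 : nat) ((j0 + N - 1) %% N)%N; first exact: residual_last_row.
exact: residual_even.
Qed.

End Gap.

Lemma light_codeword_Z_combination :
  (#|[pred v | isVar v && (y v != 0%R)]| < n)%N ->
  exists lam : pos n -> F, forall v, isVar v -> \sum_(p | isCZ p) lam p * Z p v = y v.
Proof.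
move=> y_light.
have gap b (c : pos n -> 'I_N) : exists k : 'I_n,
    forall v, isVar v -> odd v.1 = b -> (c v)./2 = k -> y v = 0.
  have half_lt v : ((c v)./2 < n)%N by have := ltn_ord (c v); lia.
  pose S := [pred v | isVar v && (y v != 0) && (odd v.1 == b)].
  have S_light : (#|S| < n)%N.
    apply: leq_ltn_trans y_light; apply: subset_leq_card; apply/subsetP => v.
    by rewrite !inE => /andP[->].
  have [k k_miss] := missing_value (fun v => Ordinal (half_lt v)) S_light.
  exists k => v vV v1 cv; apply/eqP/negPn/negP => yv.
  have := k_miss v; rewrite !inE vV yv v1 eqxx => /(_ isT).
  by rewrite -(inj_eq val_inj) /= cv eqxx.
have [j j_gap] := gap true (fun v => v.2).
have [i i_gap] := gap false (fun v => v.1).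
exists (coef j.*2.+1) => v vV; apply/eqP; rewrite -subr_eq0; apply/eqP.
apply: (@residual_eq0 j.*2.+1 i.*2) vV.
- by rewrite /= odd_double.
- by have := ltn_ord j; lia.
- by rewrite odd_double.
- by have := ltn_ord i; lia.
- by move=> u uV u1 u2; apply: j_gap => //; rewrite u2; lia.
- by move=> u uV /negPf u1 u2; apply: i_gap => //; rewrite u2; lia.
Qed.

End Peeling.

(** * Toric codes *)

Section Transport.
Variables (n : nat) (F : fieldType).
Hypothesis n_gt1 : (1 < n)%N.

Definition extend2 (P Q : pred (pos n)) (H : {x | P x} -> {x | Q x} -> F) (c v : pos n) : F :=
  if insub c is Some c' then if insub v is Some v' then H c' v' else 0 else 0.

Definition extend1 (Q : pred (pos n)) (y : {x | Q x} -> F) (v : pos n) : F :=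
  if insub v is Some v' then y v' else 0.

Lemma extend2E (P Q : pred (pos n)) (H : {x | P x} -> {x | Q x} -> F) c v (Pc : P c) (Qv : Q v) :
  extend2 H c v = H (Sub c Pc) (Sub v Qv).
Proof. by rewrite /extend2 (insubT P Pc) (insubT Q Qv). Qed.

Lemma extend2_valr (P Q : pred (pos n)) (H : {x | P x} -> {x | Q x} -> F) c (Pc : P c) v :
  extend2 H c (val v) = H (Sub c Pc) v.
Proof. by rewrite /extend2 (insubT P Pc) valK. Qed.

Lemma extend2_val (P Q : pred (pos n)) (H : {x | P x} -> {x | Q x} -> F) c v :
  extend2 H (val c) (val v) = H c v.
Proof. by rewrite /extend2 !valK. Qed.

Lemma extend1E (Q : pred (pos n)) (y : {x | Q x} -> F) v (Qv : Q v) : extend1 y v = y (Sub v Qv).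
Proof. by rewrite /extend1 (insubT Q Qv). Qed.

Lemma extend1_val (Q : pred (pos n)) (y : {x | Q x} -> F) v : extend1 y (val v) = y v.
Proof. by rewrite /extend1 valK. Qed.

Lemma sum_sig (P : pred (pos n)) (f : pos n -> F) :
  \sum_(x : {x | P x}) f (val x) = \sum_(x | P x) f x.
Proof.
rewrite (reindex_omap (val : {x | P x} -> pos n) insub) => [|x Px]; last by rewrite insubT.
by apply: eq_bigl => x; rewrite valP valK eqxx.
Qed.

(* [σ = id] gives the statement for X-codewords; transposing the torus swaps the
   roles of X- and Z-checks. *)
Variables (σ : pos n -> pos n) (PX PZ : pred (pos n)).
Hypotheses (σK : involutive σ) (isVar_σ : forall v, isVar (σ v) = isVar v).
Hypotheses (PX_σ : forall c, PX (σ c) = isCX c) (PZ_σ : forall p, PZ (σ p) = isCZ p).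
Hypothesis adj_σ : forall c v, adj (σ c) (σ v) = adj c v.

Lemma sum_var_pullback (g : pos n -> F) :
  \sum_(v | isVar v) g (σ v) = \sum_(v : VN n) g (val v).
Proof.
rewrite sum_sig (reindex_inj (inv_inj σK)) /=.
by under eq_bigl do rewrite isVar_σ; under eq_bigr do rewrite σK.
Qed.

Variables (H1 : {x | PX x} -> VN n -> F) (H2 : {x | PZ x} -> VN n -> F).
Hypotheses (lab1 : labeling H1) (lab2 : labeling H2).
Hypothesis H12_orth : forall c p, \sum_v H1 c v * H2 p v = 0.

Lemma light_codeword_in_rowspan y : in_code H1 y -> (wt y < n)%N -> in_rowspan H2 y.
Proof.
move=> y_code y_light.
have PX_σ' c : isCX c -> PX (σ c) by rewrite PX_σ.
have PZ_σ' p : isCZ p -> PZ (σ p) by rewrite PZ_σ.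
have isVar_σ' v : isVar v -> isVar (σ v) by rewrite isVar_σ.
pose X c v := extend2 H1 (σ c) (σ v).
pose Z p v := extend2 H2 (σ p) (σ v).
pose y' v := extend1 y (σ v).
have labX c v : isCX c -> isVar v -> (X c v != 0) = adj c v.
  by move=> cX vV; rewrite /X (extend2E H1 (PX_σ' c cX) (isVar_σ' v vV)) lab1 adj_σ.
have labZ p v : isCZ p -> isVar v -> (Z p v != 0) = adj p v.
  by move=> pZ vV; rewrite /Z (extend2E H2 (PZ_σ' p pZ) (isVar_σ' v vV)) lab2 adj_σ.
have XZ_orth c p : isCX c -> isCZ p -> \sum_(v | isVar v) X c v * Z p v = 0.
  move=> cX pZ; rewrite (sum_var_pullback (fun w => extend2 H1 (σ c) w * extend2 H2 (σ p) w)).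
  by under eq_bigr do rewrite (extend2_valr H1 (PX_σ' c cX)) (extend2_valr H2 (PZ_σ' p pZ)).
have y'_code c : isCX c -> \sum_(v | isVar v) X c v * y' v = 0.
  move=> cX; rewrite (sum_var_pullback (fun w => extend2 H1 (σ c) w * extend1 y w)).
  by under eq_bigr do rewrite (extend2_valr H1 (PX_σ' c cX)) extend1_val.
have y'_light : (#|[pred v | isVar v && (y' v != 0%R)]| < n)%N.
  apply: leq_ltn_trans y_light; apply: leq_trans (leq_imset_card (σ \o val) _).
  apply: subset_leq_card; apply/subsetP => v; rewrite inE => /andP[vV y'v].
  apply/imsetP; exists (Sub (σ v) (isVar_σ' v vV)); last by rewrite /= σK.
  by move: y'v; rewrite /y' (extend1E y (isVar_σ' v vV)).
have [lam lamE] := light_codeword_Z_combination n_gt1 labX labZ XZ_orth y'_code y'_light.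
exists (fun p => lam (σ (val p))) => v.
have := lamE _ (isVar_σ' _ (valP v)); rewrite /y' σK extend1_val => <-.
rewrite (reindex_inj (inv_inj σK)) /=.
under eq_bigl do rewrite -PZ_σ σK.
by rewrite -sum_sig; apply: eq_bigr => p _; rewrite /Z !σK extend2_val.
Qed.

End Transport.

Section ToricCodes.
Variables (n : nat) (F : fieldType).
Hypothesis n_gt1 : (1 < n)%N.
Variables (HX : CX n -> VN n -> F) (HZ : CZ n -> VN n -> F).
Hypotheses (labX : labeling HX) (labZ : labeling HZ).
Hypothesis XZ_orth : forall c p, \sum_v HX c v * HZ p v = 0.

Lemma light_X_codeword_in_Z_rowspan y : in_code HX y -> (wt y < n)%N -> in_rowspan HZ y.
Proof. exact: (light_codeword_in_rowspan n_gt1 (σ := id)). Qed.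

Lemma light_Z_codeword_in_X_rowspan y : in_code HZ y -> (wt y < n)%N -> in_rowspan HX y.
Proof.
apply: (light_codeword_in_rowspan n_gt1 (σ := swap_pair)) => //.
- exact: swap_pairK.
- by move=> v; rewrite /isVar /= addnC.
- by move=> c; rewrite /isCZ /isCX /= andbC.
- by move=> p; rewrite /isCZ /isCX /= andbC.
- move=> c v; rewrite /adj /=.
  by do 6 case: (_ == _).
- by move=> p c; rewrite -[RHS](XZ_orth c p); apply: eq_bigr => v _; rewrite mulrC.
Qed.

End ToricCodes.

Theorem theorem2 (n m : nat) (F : finFieldType) (b : 'I_m -> F) (A : F -> 'M['F_2]_m)
    (HX : CX n -> VN n -> F) (HZ : CZ n -> VN n -> F) :
  (2 <= n)%N -> (1 <= m)%N -> #|F| = (2 ^ m)%N ->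
  is_F2_basis b -> mult_matrix b A ->
  labeling HX -> labeling HZ ->
  cycles_product_one HX ->
  (forall y, dual (in_code HZ) y -> in_code HX y) ->
  (forall x, in_code (extX A HX) x -> ~ dual (in_code (extZ A HZ)) x -> (n <= wt x)%N) /\
  (forall x, in_code (extZ A HZ) x -> ~ dual (in_code (extX A HX)) x -> (n <= wt x)%N).
Proof.
move=> n_gt1 m_gt0 cardF b_basis A_mult labX labZ _ dualZ_sub_codeX.
have XZ_orth := orthogonal_checks dualZ_sub_codeX.
have cardF2 : #|F| = (#|'F_2| ^ m)%N by rewrite card_Fp.
have AD := mult_matrixD cardF b_basis A_mult.
have AM := mult_matrixM cardF b_basis A_mult.
have A1 := mult_matrix1 b_basis A_mult.
pose AT a := (A a)^T.
have ATD : {morph AT : a c / a + c} by move=> a c; rewrite /AT AD linearD.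
have ATM : {morph AT : a c / a * c >-> a *m c} by move=> a c; rewrite /AT mulrC AM trmx_mul.
have AT1 : AT 1 = 1%:M by rewrite /AT A1 trmx1.
split=> x x_code x_not_dual; rewrite leqNgt; apply/negP => x_light; apply: x_not_dual.
  apply: rowspan_dual_code.
  apply: (expanded_light_codeword_in_rowspan m_gt0 cardF2 AD AM A1 _ x_code x_light).
  exact: light_X_codeword_in_Z_rowspan.
have extZ_T : extZ A HZ =2 blowup AT HZ by move=> ? ?; rewrite /blowup mxE.
have extX_T : extX A HX =2 blowupT AT HX by move=> ? ?; rewrite /blowupT mxE.
have x_span : in_rowspan (blowupT AT HX) x.
  apply: (expanded_light_codeword_in_rowspan m_gt0 cardF2 ATD ATM AT1 _ _ x_light).
    exact: light_Z_codeword_in_X_rowspan.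
  exact/(eq_in_code _ extZ_T).
by move=> z /(eq_in_code _ extX_T); apply: (rowspan_dual_code x_span).
Qed.
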